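(* (i) Let $I,J$ be sets and $R\colon I\times J\to\{0,1\}\subseteq[0,1]$ a boolean ($\{0,1\}$-valued) relation. Then $f_R(x)\cdot f_R(y)\le f_R(x\cdot y)$ for all $x,y\in[0,1]^I$. (ii) Let $\mathbf A,\mathbf B$ be semisimple Pavelka algebras and $f\colon A\to B$, $g\colon B\to A$ with $f\leftrightarrows g$. If $f(x)\cdot f(y)\le f(x\cdot y)$ for all $x,y\in A$, then the relation $R\colon\mathrm{Spec_M}\mathbf A\times\mathrm{Spec_M}\mathbf B\to[0,1]$, $R(F,G)=\bigwedge_{a\in A}(f(a)/G\rightarrow a/F)$, is $\{0,1\}$-valued.
   Context: An MV-algebra $(A;\oplus,\neg,0)$ carries derived operations $1=\neg0$, $x\cdot y=\neg(\neg x\oplus\neg y)$, $x\rightarrow y=\neg x\oplus y$, order $x\le y$ iff $\neg x\oplus y=1$. The standard MV-algebra is $[0,1]$ with $x\oplus y=\min\{x+y,1\}$, $\neg x=1-x$. A Pavelka algebra is $\mathbf A=(A;\oplus,\neg,\{\mathbf r\mid r\in[0,1]\cap\mathbb Q\})$ with $(A;\oplus,\neg,\mathbf 0)$ an MV-algebra, $\mathbf r\oplus\mathbf s=\mathbf t$ whenever $\min\{r+s,1\}=t$, $\neg\mathbf r=\mathbf s$ whenever $1-r=s$. Filters are filters of the MV-reduct; $\mathrm{Spec_M}\mathbf A$ is the set of maximal proper filters; for $F\in\mathrm{Spec_M}\mathbf A$, $\mathbf A/F$ embeds uniquely into the standard Pavelka algebra $[0,1]$ and $x/F$ is identified with its image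 in $[0,1]$. $\mathbf A$ is semisimple if its MV-reduct is a subdirect product of simple MV-algebras. $f\leftrightarrows g$ means: $f,g$ monotone, $x\le f(y)$ iff $g(x)\le y$ for all $y\in A,x\in B$, and $\mathbf r\rightarrow f(y)=f(\mathbf r\rightarrow y)$ for all $y\in A$ and constants $\mathbf r$. For $R\colon I\times J\to[0,1]$: $f_R(x)(j)=\bigwedge_{i\in I}(R(i,j)\rightarrow x(i))$ for $x\in[0,1]^I$, with operations of $[0,1]$ applied componentwise. *)

From Stdlib Require Import Reals ClassicalEpsilon.
Open Scope R_scope.

Definition luk_oplus (x y : R) : R := Rmin (x + y) 1.
Definition luk_neg (x : R) : R := 1 - x.
Definition luk_mul (x y : R) : R := luk_neg (luk_oplus (luk_neg x) (luk_neg y)).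
Definition luk_imp (x y : R) : R := luk_oplus (luk_neg x) y.

Definition is_inf01 {I : Type} (h : I -> R) (m : R) : Prop :=
  0 <= m <= 1 /\ (forall i, m <= h i) /\
  (forall l, 0 <= l <= 1 -> (forall i, l <= h i) -> l <= m).
Definition inf01 {I : Type} (h : I -> R) : R :=
  epsilon (inhabits 0) (is_inf01 h).

Definition fR {I J : Type} (Rel : I -> J -> R) (x : I -> R) (j : J) : R :=
  inf01 (fun i => luk_imp (Rel i j) (x i)).

Record MVAlg := {
  mv_car :> Type;
  mv_oplus : mv_car -> mv_car -> mv_car;
  mv_neg : mv_car -> mv_car;
  mv_zero : mv_car;
  mv_assoc : forall x y z, mv_oplus x (mv_oplus y z) = mv_oplus (mv_oplus x y) z;
  mv_comm : forall x y, mv_oplus x y = mv_oplus y x;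
  mv_unit : forall x, mv_oplus x mv_zero = x;
  mv_negneg : forall x, mv_neg (mv_neg x) = x;
  mv_absorb : forall x, mv_oplus x (mv_neg mv_zero) = mv_neg mv_zero;
  mv_luk : forall x y, mv_oplus (mv_neg (mv_oplus (mv_neg x) y)) y
                     = mv_oplus (mv_neg (mv_oplus (mv_neg y) x)) x
}.
Arguments mv_oplus {m}.
Arguments mv_neg {m}.
Arguments mv_zero {m}.

Definition mv_one {A : MVAlg} : A := mv_neg mv_zero.
Definition mv_mul {A : MVAlg} (x y : A) : A := mv_neg (mv_oplus (mv_neg x) (mv_neg y)).
Definition mv_imp {A : MVAlg} (x y : A) : A := mv_oplus (mv_neg x) y.
Definition mv_le {A : MVAlg} (x y : A) : Prop := mv_oplus (mv_neg x) y = mv_one.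

Definition is_mv_hom {A B : MVAlg} (h : A -> B) : Prop :=
  (forall x y, h (mv_oplus x y) = mv_oplus (h x) (h y)) /\
  (forall x, h (mv_neg x) = mv_neg (h x)) /\ h mv_zero = mv_zero.

Definition is_filter {A : MVAlg} (F : A -> Prop) : Prop :=
  F mv_one /\ (forall x y, F x -> mv_le x y -> F y) /\
  (forall x y, F x -> F y -> F (mv_mul x y)).
Definition proper_filter {A : MVAlg} (F : A -> Prop) : Prop :=
  is_filter F /\ exists x, ~ F x.
Definition is_max_filter {A : MVAlg} (F : A -> Prop) : Prop :=
  proper_filter F /\
  forall G : A -> Prop, proper_filter G -> (forall x, F x -> G x) -> forall x, G x -> F x.

Definition is_simple (B : MVAlg) : Prop :=
  (mv_one : B) <> mv_zero /\
  forall G : B -> Prop, is_filter G ->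
    (forall x, G x <-> x = mv_one) \/ (forall x, G x).

(* semisimple: subdirect product of simple MV-algebras *)
Definition is_semisimple_mv (A : MVAlg) : Prop :=
  exists (K : Type) (B : K -> MVAlg) (h : forall k, A -> B k),
    (forall k, is_simple (B k)) /\ (forall k, is_mv_hom (h k)) /\
    (forall k (b : B k), exists a, h k a = b) /\
    (forall x y, (forall k, h k x = h k y) -> x = y).

Definition is_rat (r : R) : Prop := exists p q : Z, IZR q <> 0 /\ r = IZR p / IZR q.
Definition rat01 (r : R) : Prop := is_rat r /\ 0 <= r <= 1.

(* the constant r-bar is pav_c r, for r in [0,1] ∩ Q (values elsewhere irrelevant) *)
Record PavAlg := {
  pav_mv :> MVAlg;
  pav_c : R -> pav_mv;
  pav_c0 : pav_c 0 = mv_zero;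
  pav_c_oplus : forall r s, rat01 r -> rat01 s ->
     mv_oplus (pav_c r) (pav_c s) = pav_c (Rmin (r + s) 1);
  pav_c_neg : forall r, rat01 r -> mv_neg (pav_c r) = pav_c (1 - r)
}.

Definition is_std_hom (A : PavAlg) (phi : A -> R) : Prop :=
  (forall x, 0 <= phi x <= 1) /\
  (forall x y, phi (mv_oplus x y) = luk_oplus (phi x) (phi y)) /\
  (forall x, phi (mv_neg x) = luk_neg (phi x)) /\
  phi mv_zero = 0 /\
  (forall r, rat01 r -> phi (pav_c A r) = r).

Definition SpecM (A : PavAlg) : Type := { F : A -> Prop | is_max_filter F }.

(* x/F : image of x/F under the (unique) embedding A/F -> [0,1];
   equivalently phi x for the hom phi : A -> [0,1] with phi^{-1}(1) = F *)
Definition quot_val (A : PavAlg) (F : A -> Prop) (x : A) : R :=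
  epsilon (inhabits 0) (fun t => exists phi : A -> R,
     is_std_hom A phi /\ (forall a, phi a = 1 <-> F a) /\ phi x = t).

Definition is_semisimple (A : PavAlg) : Prop := is_semisimple_mv (pav_mv A).

Definition adjoint (A B : PavAlg) (f : A -> B) (g : B -> A) : Prop :=
  (forall x y : A, mv_le x y -> mv_le (f x) (f y)) /\
  (forall x y : B, mv_le x y -> mv_le (g x) (g y)) /\
  (forall (y : A) (x : B), mv_le x (f y) <-> mv_le (g x) y) /\
  (forall (r : R) (y : A), rat01 r ->
      mv_imp (pav_c B r) (f y) = f (mv_imp (pav_c A r) y)).

Definition relR (A B : PavAlg) (f : A -> B) (F : SpecM A) (G : SpecM B) : R :=
  inf01 (fun a : A => luk_imp (quot_val B (proj1_sig G) (f a)) (quot_val A (proj1_sig F) a)).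

(* (i) For a boolean relation, [R i j -> _] is either the constant 1 or the
   identity, and both commute with the Lukasiewicz product; since the product is
   monotone, the infimum of products dominates the product of infima.

   (ii) A maximal filter F of a Pavelka algebra has a homomorphism into [0,1]
   with kernel F: it sends x to the supremum of the rationals r with
   [r -> x] in F, the rational constants pinning the values down.  If
   [a/F < f(a)/G] for some a, pick a rational r in between and let
   [a' := r -> a]; then [f(a')/G = 1] because f commutes with [r -> _], while
   [a'/F < 1].  As f is submultiplicative, all powers of a' still satisfy
   [f(a'^n)/G = 1], whereas [a'^n/F] reaches 0, so R(F,G) = 0.  Otherwise every
   term of the infimum is 1 and R(F,G) = 1. *)
From Stdlib Require Import Reals.
From Stdlib Require Import ClassicalEpsilon Classical FunctionalExtensionality Lra.
Open Scope R_scope.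

Ltac rmin := unfold Rmin, Rmax in *; repeat (destruct Rle_dec); try lra.

Section MVTheory.
Variable M : MVAlg.
Local Notation "x (+) y" := (@mv_oplus M x y) (at level 50, left associativity).
Local Notation "! x" := (@mv_neg M x) (at level 35, right associativity).
Local Notation "1m" := (@mv_one M).
Local Notation "0m" := (@mv_zero M).
Implicit Types x y z w a b c : M.

Lemma oplusA x y z : x (+) (y (+) z) = x (+) y (+) z. Proof. apply mv_assoc. Qed.
Lemma oplusC x y : x (+) y = y (+) x. Proof. apply mv_comm. Qed.
Lemma oplus0 x : x (+) 0m = x. Proof. apply mv_unit. Qed.
Lemma oplus0l x : 0m (+) x = x. Proof. rewrite oplusC; apply oplus0. Qed.
Lemma oplus1 x : x (+) 1m = 1m. Proof. apply mv_absorb. Qed.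
Lemma oplus1l x : 1m (+) x = 1m. Proof. rewrite oplusC; apply oplus1. Qed.
Lemma negK x : ! ! x = x. Proof. apply mv_negneg. Qed.
Lemma neg1 : ! 1m = 0m. Proof. apply negK. Qed.
Lemma oplus_luk x y : ! (! x (+) y) (+) y = ! (! y (+) x) (+) x. Proof. apply mv_luk. Qed.

Lemma oplus_negl x : ! x (+) x = 1m.
Proof. pose proof (oplus_luk x 1m) as H. rewrite oplus1, neg1, oplus0l in H. symmetry; exact H. Qed.

Lemma mv_le_refl x : mv_le x x. Proof. apply oplus_negl. Qed.
Lemma mv_le1 x : mv_le x 1m. Proof. apply oplus1. Qed.
Lemma mv_le0 x : mv_le 0m x. Proof. apply oplus1l. Qed.

Lemma mv_le_oplusr x w : mv_le x (x (+) w).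
Proof. unfold mv_le. rewrite oplusA, oplus_negl, oplus1l. reflexivity. Qed.

Lemma mv_le_oplusl x w : mv_le x (w (+) x).
Proof. rewrite oplusC; apply mv_le_oplusr. Qed.

Lemma mv_leP x y : mv_le x y -> exists w, y = x (+) w.
Proof.
  unfold mv_le; intro H. exists (! (! y (+) x)).
  rewrite oplusC, oplus_luk, H, neg1, oplus0l. reflexivity.
Qed.

Lemma mv_le_trans x y z : mv_le x y -> mv_le y z -> mv_le x z.
Proof.
  intros H1 H2. destruct (mv_leP _ _ H1) as [w1 ->]. destruct (mv_leP _ _ H2) as [w2 ->].
  rewrite <- oplusA. apply mv_le_oplusr.
Qed.

Lemma mv_le_oplus2r x y z : mv_le x y -> mv_le (x (+) z) (y (+) z).
Proof.
  intro H. destruct (mv_leP _ _ H) as [w ->].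
  rewrite <- oplusA, (oplusC w z), oplusA. apply mv_le_oplusr.
Qed.

Lemma mv_le_oplus2 x y z w : mv_le x y -> mv_le z w -> mv_le (x (+) z) (y (+) w).
Proof.
  intros H1 H2. apply mv_le_trans with (y (+) z); [apply mv_le_oplus2r; exact H1|].
  rewrite (oplusC y z), (oplusC y w). apply mv_le_oplus2r; exact H2.
Qed.

Lemma mv_le_neg x y : mv_le x y -> mv_le (! y) (! x).
Proof. unfold mv_le; intro H. rewrite negK, oplusC. exact H. Qed.

Lemma mv_mulC x y : mv_mul x y = mv_mul y x. Proof. unfold mv_mul. rewrite oplusC. reflexivity. Qed.
Lemma mv_mulA x y z : mv_mul x (mv_mul y z) = mv_mul (mv_mul x y) z.
Proof. unfold mv_mul. rewrite !negK, oplusA. reflexivity. Qed.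
Lemma mv_mul1 x : mv_mul x 1m = x.
Proof. unfold mv_mul. rewrite neg1, oplus0, negK. reflexivity. Qed.
Lemma mv_mul1l x : mv_mul 1m x = x. Proof. rewrite mv_mulC; apply mv_mul1. Qed.

Lemma mv_le_mul2r x y z : mv_le x y -> mv_le (mv_mul x z) (mv_mul y z).
Proof. intro H. unfold mv_mul. apply mv_le_neg, mv_le_oplus2r, mv_le_neg, H. Qed.

Lemma mv_le_mul2 x y z w : mv_le x y -> mv_le z w -> mv_le (mv_mul x z) (mv_mul y w).
Proof.
  intros H1 H2. apply mv_le_trans with (mv_mul y z); [apply mv_le_mul2r; exact H1|].
  rewrite (mv_mulC y z), (mv_mulC y w). apply mv_le_mul2r; exact H2.
Qed.

Lemma mv_residuation a b c : mv_le (mv_mul a b) c <-> mv_le a (mv_imp b c).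
Proof. unfold mv_le, mv_mul, mv_imp. rewrite negK, oplusA. tauto. Qed.

Lemma mv_modus_ponens x y : mv_le (mv_mul x (mv_imp x y)) y.
Proof.
  unfold mv_le, mv_mul, mv_imp.
  rewrite negK, <- oplusA, oplus_luk, (oplusC (! _) x), oplusA, oplus_negl, oplus1l.
  reflexivity.
Qed.

Lemma mv_mul_oplus_le a b c : mv_le (mv_mul (a (+) b) c) (mv_mul a c (+) b).
Proof.
  apply (proj2 (mv_residuation _ _ _)). unfold mv_imp.
  assert (E : ! c (+) mv_mul a c = ! (c (+) a) (+) a).
  { unfold mv_mul. rewrite oplusC. pose proof (oplus_luk a (! c)) as H.
    rewrite negK in H. rewrite H. reflexivity. }
  rewrite oplusA, E. apply mv_le_oplus2r, mv_le_oplusl.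
Qed.

Lemma mv_imp_oplus a b c w :
  mv_le (mv_mul (mv_imp a b) (mv_imp c w)) (mv_imp (a (+) c) (b (+) w)).
Proof.
  apply (proj1 (mv_residuation _ _ _)).
  set (p := mv_imp a b). set (q := mv_imp c w).
  replace (mv_mul (mv_mul p q) (a (+) c)) with (mv_mul (mv_mul (a (+) c) p) q)
    by (rewrite <- !mv_mulA, (mv_mulC q), !mv_mulA, (mv_mulC p); reflexivity).
  apply mv_le_trans with (mv_mul (mv_mul a p (+) c) q).
  { apply mv_le_mul2r, mv_mul_oplus_le. }
  rewrite oplusC.
  apply mv_le_trans with (mv_mul c q (+) mv_mul a p); [apply mv_mul_oplus_le|].
  rewrite (oplusC b w). apply mv_le_oplus2; apply mv_modus_ponens.
Qed.

Lemma mv_imp_trans x y z : mv_le (mv_mul (mv_imp x y) (mv_imp y z)) (mv_imp x z).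
Proof.
  apply (proj1 (mv_residuation _ _ _)). rewrite mv_mulC, mv_mulA.
  apply mv_le_trans with (mv_mul y (mv_imp y z)).
  - apply mv_le_mul2r, mv_modus_ponens.
  - apply mv_modus_ponens.
Qed.

Lemma mv_mul_oplus_absorb x z : mv_mul x z (+) (x (+) z) = x (+) z.
Proof.
  set (W := ! (! z (+) mv_mul x z)).
  assert (E1 : mv_mul x z (+) W = z).
  { unfold W. rewrite oplusC, oplus_luk. unfold mv_mul.
    rewrite negK, <- oplusA, oplus_negl, oplus1, neg1, oplus0l. reflexivity. }
  assert (E2 : x (+) W = x (+) z).
  { assert (H : ! (x (+) z) (+) x = mv_mul x z (+) ! z).
    { pose proof (oplus_luk (! z) x) as H. rewrite negK, (oplusC z x) in H.
      rewrite H. reflexivity. }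
    unfold W. rewrite (oplusC (! z)), <- H, oplusC, oplus_luk.
    rewrite (oplusA (! x) x z), oplus_negl, oplus1l, neg1, oplus0l. reflexivity. }
  rewrite <- E2 at 1. rewrite oplusA, (oplusC _ x), <- oplusA, E1. reflexivity.
Qed.

Lemma mv_prelinear x y : mv_imp (mv_imp x y) (mv_imp y x) = mv_imp y x.
Proof.
  unfold mv_imp. rewrite <- (negK y) at 1. fold (mv_mul x (! y)).
  rewrite (oplusC (! y) x). apply mv_mul_oplus_absorb.
Qed.

Fixpoint mv_pow (a : M) (n : nat) : M :=
  match n with O => 1m | S n => mv_mul a (mv_pow a n) end.

Lemma mv_powD a n m : mv_pow a (n + m) = mv_mul (mv_pow a n) (mv_pow a m).
Proof.
  induction n as [|n IHn]; simpl; [rewrite mv_mul1l; reflexivity|].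
  rewrite IHn, mv_mulA. reflexivity.
Qed.

Lemma filter_up (F : M -> Prop) x y : is_filter F -> F x -> mv_le x y -> F y.
Proof. intros [_ [H _]]; eauto. Qed.
Lemma filter_mul (F : M -> Prop) x y : is_filter F -> F x -> F y -> F (mv_mul x y).
Proof. intros [_ [_ H]]; eauto. Qed.
Lemma filter_one (F : M -> Prop) : is_filter F -> F 1m.
Proof. intros [H _]; exact H. Qed.

Lemma filter_imp_trans (F : M -> Prop) x y z : is_filter F ->
  F (mv_imp x y) -> F (mv_imp y z) -> F (mv_imp x z).
Proof.
  intros HF H1 H2. apply (filter_up F _ _ HF (filter_mul F _ _ HF H1 H2)). apply mv_imp_trans.
Qed.

Lemma filter_imp_oplus (F : M -> Prop) a b a' b' : is_filter F ->
  F (mv_imp a b) -> F (mv_imp a' b') -> F (mv_imp (a (+) a') (b (+) b')).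
Proof.
  intros HF H1 H2. apply (filter_up F _ _ HF (filter_mul F _ _ HF H1 H2)). apply mv_imp_oplus.
Qed.

Lemma filter_generated (F : M -> Prop) a : is_filter F ->
  is_filter (fun y => exists f n, F f /\ mv_le (mv_mul f (mv_pow a n)) y).
Proof.
  intro HF. split; [|split].
  - exists 1m, O. split; [apply filter_one; exact HF | apply mv_le1].
  - intros x y [f [n [H1 H2]]] H3. exists f, n. split; [exact H1 | eapply mv_le_trans; eauto].
  - intros x y [f [n [H1 H2]]] [g [m [H3 H4]]]. exists (mv_mul f g), (n + m)%nat.
    split; [apply filter_mul; assumption|].
    rewrite mv_powD.
    replace (mv_mul (mv_mul f g) (mv_mul (mv_pow a n) (mv_pow a m)))
      with (mv_mul (mv_mul f (mv_pow a n)) (mv_mul g (mv_pow a m))).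
    + apply mv_le_mul2; assumption.
    + rewrite <- !mv_mulA. f_equal.
      rewrite (mv_mulA (mv_pow a n) g), (mv_mulC (mv_pow a n) g), <- mv_mulA. reflexivity.
Qed.

(* Adjoining [a] to a maximal filter not containing it gives the whole algebra,
   so [0] lies above some [f * a^n] with [f] in [F]. *)
Lemma max_filter_neg_pow (F : M -> Prop) a : is_max_filter F -> ~ F a ->
  exists n, F (! mv_pow a n).
Proof.
  intros [[HF Hproper] Hmax] Ha.
  set (G := fun y => exists f n, F f /\ mv_le (mv_mul f (mv_pow a n)) y).
  destruct (classic (exists x, ~ G x)) as [HG|HG].
  - exfalso. apply Ha. apply (Hmax G); [split; [apply filter_generated, HF | exact HG]| |].
    + intros x Fx. exists x, O. split; [exact Fx|]. simpl. rewrite mv_mul1. apply mv_le_refl.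
    + exists 1m, 1%nat. split; [apply filter_one, HF|]. simpl. rewrite mv_mul1, mv_mul1l.
      apply mv_le_refl.
  - assert (G0 : G 0m) by (apply NNPP; intro; apply HG; eauto).
    destruct G0 as [f [n [H1 H2]]]. exists n.
    apply (filter_up F f); [exact HF | exact H1|].
    unfold mv_le, mv_mul in *. rewrite negK, oplus0 in H2. exact H2.
Qed.

Lemma mv_imp_pow_le a b : mv_le (mv_imp a b) b -> forall k, mv_le (mv_imp (mv_pow a k) b) b.
Proof.
  intros Hab k. induction k as [|k IHk]; simpl.
  - unfold mv_imp. rewrite neg1, oplus0l. apply mv_le_refl.
  - apply mv_le_trans with (mv_imp a b); [|exact Hab].
    unfold mv_imp, mv_mul. rewrite negK, <- oplusA, !(oplusC (! a)).
    apply mv_le_oplus2r. exact IHk.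
Qed.

Lemma max_filter_linear (F : M -> Prop) x y : is_max_filter F ->
  F (mv_imp x y) \/ F (mv_imp y x).
Proof.
  intro HF. destruct (classic (F (mv_imp x y))) as [H|H]; [left; exact H|right].
  destruct (max_filter_neg_pow F _ HF H) as [n Hn].
  assert (Hpow := mv_imp_pow_le (mv_imp x y) (mv_imp y x)).
  rewrite mv_prelinear in Hpow. specialize (Hpow (mv_le_refl _) n).
  destruct HF as [[HF _] _].
  apply (filter_up F _ _ HF Hn). eapply mv_le_trans; [|exact Hpow]. apply mv_le_oplusr.
Qed.

End MVTheory.

Lemma is_rat_IZR z : is_rat (IZR z).
Proof. exists z, 1%Z. split; simpl; [lra | field]. Qed.

Lemma is_rat_add r s : is_rat r -> is_rat s -> is_rat (r + s).
Proof.
  intros [p [q [Hq ->]]] [p' [q' [Hq' ->]]].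
  exists (p * q' + p' * q)%Z, (q * q')%Z. rewrite mult_IZR. split.
  - intro H. apply Rmult_integral in H. tauto.
  - rewrite plus_IZR, !mult_IZR. field. tauto.
Qed.

Lemma is_rat_opp r : is_rat r -> is_rat (- r).
Proof.
  intros [p [q [Hq ->]]]. exists (- p)%Z, q. split; [exact Hq|]. rewrite opp_IZR. field; exact Hq.
Qed.

Lemma rat01_0 : rat01 0. Proof. split; [apply (is_rat_IZR 0) | lra]. Qed.
Lemma rat01_1 : rat01 1. Proof. split; [apply (is_rat_IZR 1) | lra]. Qed.

Lemma rat01_compl r : rat01 r -> rat01 (1 - r).
Proof.
  intros [H1 H2]. split; [|lra].
  apply is_rat_add; [apply (is_rat_IZR 1) | apply is_rat_opp, H1].
Qed.

Lemma rat01_oplus r s : rat01 r -> rat01 s -> rat01 (Rmin (r + s) 1).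
Proof.
  intros [H1 H2] [H3 H4]. apply Rmin_case_strong; intro.
  - split; [apply is_rat_add; assumption | lra].
  - apply rat01_1.
Qed.

Lemma rat_dense a b : a < b -> exists r, is_rat r /\ a < r < b.
Proof.
  intro Hab.
  destruct (archimed (/ (b - a))) as [H1 H2].
  set (N := IZR (up (/ (b - a)))) in *.
  assert (HN : 0 < N) by (assert (0 < / (b - a)) by (apply Rinv_0_lt_compat; lra); lra).
  assert (HbaN : 1 < (b - a) * N).
  { apply Rmult_lt_reg_l with (/ (b - a)); [apply Rinv_0_lt_compat; lra|].
    rewrite <- Rmult_assoc, Rinv_l by lra. lra. }
  destruct (archimed (a * N)) as [H3 H4].
  exists (IZR (up (a * N)) / N). split.
  - exists (up (a * N)), (up (/ (b - a))). split; [fold N; lra | reflexivity].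
  - split; apply Rmult_lt_reg_r with N; try exact HN;
      unfold Rdiv; rewrite Rmult_assoc, Rinv_l by lra; lra.
Qed.

Lemma rat01_dense a b : 0 <= a -> a < b -> b <= 1 -> exists r, rat01 r /\ a < r < b.
Proof.
  intros. destruct (rat_dense a b) as [r [H2 H3]]; [assumption|].
  exists r. split; [split; [exact H2 | lra] | exact H3].
Qed.

Section StdHom.
Variable A : PavAlg.
Variable phi : A -> R.
Hypothesis Hphi : is_std_hom A phi.

Lemma std_hom_01 x : 0 <= phi x <= 1. Proof. apply Hphi. Qed.
Lemma std_hom_oplus x y : phi (mv_oplus x y) = Rmin (phi x + phi y) 1. Proof. apply Hphi. Qed.
Lemma std_hom_neg x : phi (mv_neg x) = 1 - phi x. Proof. apply Hphi. Qed.
Lemma std_hom_c r : rat01 r -> phi (pav_c A r) = r. Proof. apply Hphi. Qed.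

Lemma std_hom_one : phi mv_one = 1.
Proof. unfold mv_one. rewrite std_hom_neg. destruct Hphi as [_ [_ [_ [-> _]]]]. lra. Qed.

Lemma std_hom_mul x y : phi (mv_mul x y) = luk_mul (phi x) (phi y).
Proof. unfold mv_mul. rewrite std_hom_neg, std_hom_oplus, !std_hom_neg. reflexivity. Qed.

Lemma std_hom_imp x y : phi (mv_imp x y) = Rmin (1 - phi x + phi y) 1.
Proof. unfold mv_imp. rewrite std_hom_oplus, std_hom_neg. reflexivity. Qed.

Lemma std_hom_le x y : mv_le x y -> phi x <= phi y.
Proof.
  unfold mv_le. intro H. pose proof std_hom_one as H1. rewrite <- H in H1.
  rewrite std_hom_oplus, std_hom_neg in H1.
  pose proof (std_hom_01 x). pose proof (std_hom_01 y). rmin.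
Qed.

Lemma std_hom_imp_c_one r x : rat01 r -> (phi (mv_imp (pav_c A r) x) = 1 <-> r <= phi x).
Proof.
  intro Hr. rewrite std_hom_imp, std_hom_c by exact Hr.
  pose proof (std_hom_01 x). split; intro; rmin.
Qed.

Lemma std_hom_pow_le a k : phi (mv_pow A a k) <= Rmax 0 (1 - INR k * (1 - phi a)).
Proof.
  pose proof (std_hom_01 a). induction k as [|k IHk]; cbn [mv_pow].
  - rewrite std_hom_one. simpl INR. rmin.
  - rewrite std_hom_mul, S_INR. pose proof (std_hom_01 (mv_pow A a k)).
    unfold luk_mul, luk_neg, luk_oplus. rmin.
Qed.
End StdHom.

(* A rational strictly between [phi1 x] and [phi2 x] would separate them on [r -> x]. *)
Lemma std_hom_unique (A : PavAlg) (F : A -> Prop) phi1 phi2 :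
  is_std_hom A phi1 -> is_std_hom A phi2 ->
  (forall a, phi1 a = 1 <-> F a) -> (forall a, phi2 a = 1 <-> F a) ->
  forall x, phi1 x = phi2 x.
Proof.
  assert (D : forall phi phi', is_std_hom A phi -> is_std_hom A phi' ->
            (forall a, phi a = 1 <-> F a) -> (forall a, phi' a = 1 <-> F a) ->
            forall x, ~ phi x < phi' x).
  { intros phi phi' Hp Hp' Kp Kp' x Hlt.
    pose proof (std_hom_01 A phi Hp x). pose proof (std_hom_01 A phi' Hp' x).
    destruct (rat01_dense (phi x) (phi' x)) as [r [Hr Hr2]]; try lra.
    assert (Fr : F (mv_imp (pav_c A r) x))
      by (apply Kp', std_hom_imp_c_one; [exact Hp' | exact Hr | lra]).
    apply Kp, std_hom_imp_c_one in Fr; [lra | exact Hp | exact Hr]. }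
  intros H1 H2 K1 K2 x. pose proof (D _ _ H1 H2 K1 K2 x). pose proof (D _ _ H2 H1 K2 K1 x). lra.
Qed.

Lemma quot_val_eq (A : PavAlg) (F : A -> Prop) phi x :
  is_std_hom A phi -> (forall a, phi a = 1 <-> F a) -> quot_val A F x = phi x.
Proof.
  intros Hp K. unfold quot_val.
  match goal with |- epsilon ?i ?P = _ =>
    assert (HP : P (epsilon i P)) by (apply epsilon_spec; exists (phi x), phi; auto) end.
  destruct HP as [phi' [H1 [H2 H3]]]. rewrite <- H3. apply (std_hom_unique A F); assumption.
Qed.

(** * The quotient by a maximal filter *)

Section MaxFilterHom.
Variable A : PavAlg.
Variable F : A -> Prop.
Hypothesis HF : is_max_filter F.
Local Notation c := (pav_c A).

Let HFf : is_filter F := proj1 (proj1 HF).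

Lemma pav_c1 : c 1 = mv_one.
Proof.
  pose proof (pav_c_neg A 0 rat01_0) as H. rewrite pav_c0 in H.
  replace (1 - 0) with 1 in H by lra. rewrite <- H. reflexivity.
Qed.

Lemma pav_c_imp r s : rat01 r -> rat01 s -> mv_imp (c r) (c s) = c (Rmin (1 - r + s) 1).
Proof. intros. unfold mv_imp. rewrite pav_c_neg, pav_c_oplus; auto using rat01_compl. Qed.

Lemma pav_c_mul r s : rat01 r -> rat01 s ->
  mv_mul (c r) (c s) = c (1 - Rmin ((1 - r) + (1 - s)) 1).
Proof.
  intros. unfold mv_mul.
  rewrite !pav_c_neg, pav_c_oplus, pav_c_neg; auto using rat01_compl, rat01_oplus.
Qed.

Lemma imp_c1 x : mv_imp x (c 1) = mv_one.
Proof. rewrite pav_c1. apply oplus1. Qed.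

Lemma imp_c0 x : mv_imp (c 0) x = mv_one.
Proof. rewrite pav_c0. apply oplus1l. Qed.

(* Were [c t] in F, so would be its powers [c (max 0 (1 - n (1 - t)))],
   eventually [c 0 = 0], making F improper. *)
Lemma max_filter_c_lt1 t : rat01 t -> t < 1 -> ~ F (c t).
Proof.
  intros Ht Ht1 Hc.
  assert (Hpow : forall n : nat, exists u, rat01 u /\ u <= Rmax 0 (1 - INR n * (1 - t)) /\ F (c u)).
  { induction n as [|n [u [Hu [Hu1 Hu2]]]].
    - exists 1. split; [apply rat01_1|]. split; [simpl; rmin|].
      rewrite pav_c1. apply filter_one, HFf.
    - exists (1 - Rmin ((1 - t) + (1 - u)) 1). split; [auto using rat01_compl, rat01_oplus|].
      split; [rewrite S_INR; destruct Ht, Hu; rmin|].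
      rewrite <- pav_c_mul by assumption. apply filter_mul; assumption. }
  destruct (INR_archimed (1 - t) 1) as [n Hn]; [lra|].
  destruct (Hpow n) as [u [Hu [Hu1 Hu2]]].
  assert (u = 0) as -> by (destruct Hu; rmin).
  rewrite pav_c0 in Hu2. destruct (proj2 (proj1 HF)) as [y Hy]. apply Hy.
  apply (filter_up A F mv_zero); [exact HFf | exact Hu2 | apply mv_le0].
Qed.

Lemma max_filter_c_le r s : rat01 r -> rat01 s -> F (mv_imp (c s) (c r)) -> s <= r.
Proof.
  intros Hr Hs H. rewrite pav_c_imp in H by assumption.
  destruct (Rle_dec s r) as [|Hsr]; [assumption|]. exfalso.
  apply (max_filter_c_lt1 (Rmin (1 - s + r) 1)); [| rmin | exact H].
  replace (1 - s + r) with ((1 - s) + r) by ring. auto using rat01_oplus, rat01_compl.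
Qed.

Definition lower_rats (x : A) := fun r => rat01 r /\ F (mv_imp (c r) x).

Lemma lower_rats_bound x : bound (lower_rats x).
Proof. exists 1. intros r [[_ H] _]. lra. Qed.

Lemma lower_rats_inhabited x : exists r, lower_rats x r.
Proof. exists 0. split; [apply rat01_0|]. rewrite imp_c0. apply filter_one, HFf. Qed.

Definition quot_hom (x : A) : R :=
  proj1_sig (completeness (lower_rats x) (lower_rats_bound x) (lower_rats_inhabited x)).

Lemma quot_hom_lub x : is_lub (lower_rats x) (quot_hom x).
Proof. unfold quot_hom. destruct completeness as [l Hl]. exact Hl. Qed.

Lemma quot_hom_ge r x : rat01 r -> F (mv_imp (c r) x) -> r <= quot_hom x.
Proof. intros. apply quot_hom_lub. split; assumption. Qed.

Lemma quot_hom_le r x : rat01 r -> F (mv_imp x (c r)) -> quot_hom x <= r.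
Proof.
  intros Hr H. apply quot_hom_lub. intros s [Hs H2]. apply max_filter_c_le; [exact Hr | exact Hs|].
  apply (filter_imp_trans A F _ x); assumption.
Qed.

Lemma quot_hom_01 x : 0 <= quot_hom x <= 1.
Proof.
  split.
  - apply quot_hom_ge; [apply rat01_0|]. rewrite imp_c0. apply filter_one, HFf.
  - apply quot_hom_lub. intros r [[_ H] _]. lra.
Qed.

Lemma quot_hom_gt_lower r x : rat01 r -> r < quot_hom x -> F (mv_imp (c r) x).
Proof.
  intros Hr H. destruct (max_filter_linear A F (c r) x HF) as [H1|H1]; [exact H1|].
  apply quot_hom_le in H1; [lra | exact Hr].
Qed.

Lemma quot_hom_lt_upper r x : rat01 r -> quot_hom x < r -> F (mv_imp x (c r)).
Proof.
  intros Hr H. destruct (max_filter_linear A F (c r) x HF) as [H1|H1]; [|exact H1].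
  apply quot_hom_ge in H1; [lra | exact Hr].
Qed.

Lemma quot_hom_lower_approx x e : 0 < e ->
  exists r, rat01 r /\ F (mv_imp (c r) x) /\ quot_hom x - e < r.
Proof.
  intro He. pose proof (quot_hom_01 x).
  destruct (Rlt_dec (quot_hom x - e) 0).
  - exists 0. split; [apply rat01_0|]. split; [|lra]. rewrite imp_c0. apply filter_one, HFf.
  - destruct (rat01_dense (quot_hom x - e) (quot_hom x)) as [r [Hr Hr2]]; try lra.
    exists r. split; [exact Hr|]. split; [apply quot_hom_gt_lower; [exact Hr | lra] | lra].
Qed.

Lemma quot_hom_upper_approx x e : 0 < e ->
  exists r, rat01 r /\ F (mv_imp x (c r)) /\ r < quot_hom x + e.
Proof.
  intro He. pose proof (quot_hom_01 x).
  destruct (Rlt_dec 1 (quot_hom x + e)).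
  - exists 1. split; [apply rat01_1|]. split; [|lra]. rewrite imp_c1. apply filter_one, HFf.
  - destruct (rat01_dense (quot_hom x) (quot_hom x + e)) as [r [Hr Hr2]]; try lra.
    exists r. split; [exact Hr|]. split; [apply quot_hom_lt_upper; [exact Hr | lra] | lra].
Qed.

Lemma quot_hom_c r : rat01 r -> quot_hom (c r) = r.
Proof.
  intro Hr. assert (Hrr : F (mv_imp (c r) (c r))).
  { unfold mv_imp. rewrite oplus_negl. apply filter_one, HFf. }
  apply Rle_antisym; [apply quot_hom_le | apply quot_hom_ge]; assumption.
Qed.

(* Contraposition turns [r -> !x] into [x -> (1 - r)]. *)
Lemma quot_hom_neg x : quot_hom (mv_neg x) = 1 - quot_hom x.
Proof.
  pose proof (quot_hom_01 x). pose proof (quot_hom_01 (mv_neg x)).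
  assert (Hswap : forall r, rat01 r -> mv_imp (c r) (mv_neg x) = mv_imp x (c (1 - r))).
  { intros r Hr. unfold mv_imp. rewrite pav_c_neg by exact Hr. apply oplusC. }
  destruct (Rtotal_order (quot_hom (mv_neg x)) (1 - quot_hom x)) as [Hl|[He|Hg]];
    [exfalso | exact He | exfalso].
  - destruct (rat01_dense (quot_hom (mv_neg x)) (1 - quot_hom x)) as [r [Hr Hr2]]; try lra.
    assert (Hnot : ~ F (mv_imp (c r) (mv_neg x)))
      by (intro H1; apply quot_hom_ge in H1; [lra | exact Hr]).
    apply Hnot. rewrite Hswap by exact Hr.
    apply quot_hom_lt_upper; [apply rat01_compl, Hr | lra].
  - destruct (rat01_dense (1 - quot_hom x) (quot_hom (mv_neg x))) as [r [Hr Hr2]]; try lra.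
    assert (H1 : F (mv_imp (c r) (mv_neg x))) by (apply quot_hom_gt_lower; [exact Hr | lra]).
    rewrite Hswap in H1 by exact Hr. apply quot_hom_le in H1; [lra | apply rat01_compl, Hr].
Qed.

(* Approximate x and y within a third of the gap by rationals and add them up. *)
Lemma quot_hom_oplus x y : quot_hom (mv_oplus x y) = Rmin (quot_hom x + quot_hom y) 1.
Proof.
  pose proof (quot_hom_01 x). pose proof (quot_hom_01 y). pose proof (quot_hom_01 (mv_oplus x y)).
  set (m := Rmin (quot_hom x + quot_hom y) 1).
  destruct (Rtotal_order (quot_hom (mv_oplus x y)) m) as [Hl|[He|Hg]];
    [exfalso | exact He | exfalso].
  - set (d := m - quot_hom (mv_oplus x y)).
    destruct (quot_hom_lower_approx x (d / 3)) as [r [Hr [Fr Hr2]]]; [unfold d; lra|].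
    destruct (quot_hom_lower_approx y (d / 3)) as [s [Hs [Fs Hs2]]]; [unfold d; lra|].
    pose proof (filter_imp_oplus A F _ _ _ _ HFf Fr Fs) as H2.
    rewrite pav_c_oplus in H2 by assumption.
    apply quot_hom_ge in H2; [|apply rat01_oplus; assumption].
    unfold d, m in *. destruct Hr, Hs. rmin.
  - set (d := quot_hom (mv_oplus x y) - m).
    destruct (quot_hom_upper_approx x (d / 3)) as [r [Hr [Fr Hr2]]]; [unfold d; lra|].
    destruct (quot_hom_upper_approx y (d / 3)) as [s [Hs [Fs Hs2]]]; [unfold d; lra|].
    pose proof (filter_imp_oplus A F _ _ _ _ HFf Fr Fs) as H2.
    rewrite pav_c_oplus in H2 by assumption.
    apply quot_hom_le in H2; [|apply rat01_oplus; assumption].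
    unfold d, m in *. destruct Hr, Hs. rmin.
Qed.

Lemma quot_hom_std_hom : is_std_hom A quot_hom.
Proof.
  split; [exact quot_hom_01|]. split; [exact quot_hom_oplus|].
  split; [exact quot_hom_neg|]. split; [|exact quot_hom_c].
  rewrite <- pav_c0. apply quot_hom_c, rat01_0.
Qed.

Lemma quot_hom_of_F a : F a -> quot_hom a = 1.
Proof.
  intro Ha. apply Rle_antisym; [apply quot_hom_01|]. apply quot_hom_ge; [apply rat01_1|].
  rewrite pav_c1. unfold mv_imp. rewrite neg1, oplus0l. exact Ha.
Qed.

Lemma quot_hom_ker a : quot_hom a = 1 <-> F a.
Proof.
  split; [intro H | apply quot_hom_of_F].
  apply NNPP. intro Ha. destruct (max_filter_neg_pow A F a HF Ha) as [n Hn].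
  assert (Hpow : forall k, quot_hom (mv_pow A a k) = 1).
  { induction k as [|k IHk]; simpl; [apply std_hom_one, quot_hom_std_hom|].
    rewrite (std_hom_mul A _ quot_hom_std_hom), IHk, H. unfold luk_mul, luk_neg, luk_oplus. rmin. }
  apply quot_hom_of_F in Hn. rewrite quot_hom_neg, Hpow in Hn. lra.
Qed.
End MaxFilterHom.

Lemma max_filter_std_hom (A : PavAlg) (F : A -> Prop) : is_max_filter F ->
  exists phi, is_std_hom A phi /\ (forall a, phi a = 1 <-> F a).
Proof.
  intro HF. exists (quot_hom A F HF). split; [apply quot_hom_std_hom | apply quot_hom_ker].
Qed.

Section Inf01.
Variable I : Type.
Variable h : I -> R.
Hypothesis Hh : forall i, 0 <= h i <= 1.

Lemma inf01_exists : exists m, is_inf01 h m.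
Proof.
  destruct (classic (exists i : I, True)) as [[i0 _]|Hempty].
  - set (E := fun z => exists i, z = - h i).
    assert (Hb : bound E) by (exists 0; intros z [i ->]; pose proof (Hh i); lra).
    destruct (completeness E Hb (ex_intro _ (- h i0) (ex_intro _ i0 eq_refl))) as [l [Hl1 Hl2]].
    assert (Hli : forall i, - h i <= l) by (intro i; apply Hl1; exists i; reflexivity).
    exists (- l). split; [|split].
    + assert (l <= 0) by (apply Hl2; intros z [i ->]; pose proof (Hh i); lra).
      pose proof (Hli i0). pose proof (Hh i0). lra.
    + intro i. pose proof (Hli i). lra.
    + intros l' _ Hl'. assert (l <= - l') by (apply Hl2; intros z [i ->]; pose proof (Hl' i); lra).
      lra.
  - exists 1. split; [lra|]. split; [intro i; exfalso; apply Hempty; exists i; trivial|].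
    intros l Hl _. lra.
Qed.

Lemma inf01_spec : is_inf01 h (inf01 h).
Proof. unfold inf01. apply epsilon_spec, inf01_exists. Qed.

Lemma inf01_le i : inf01 h <= h i.
Proof. apply inf01_spec. Qed.

Lemma inf01_ge l : 0 <= l <= 1 -> (forall i, l <= h i) -> l <= inf01 h.
Proof. apply inf01_spec. Qed.

Lemma inf01_eq0 i : h i = 0 -> inf01 h = 0.
Proof.
  intro Hi. pose proof (inf01_le i). apply Rle_antisym; [lra|].
  apply inf01_ge; [lra | intro k; apply Hh].
Qed.

Lemma inf01_eq1 : (forall i, h i = 1) -> inf01 h = 1.
Proof.
  intro H1. apply Rle_antisym; [apply inf01_spec|].
  apply inf01_ge; [lra | intro i; rewrite H1; lra].
Qed.
End Inf01.

Lemma luk_imp_01 r x : 0 <= r <= 1 -> 0 <= x <= 1 -> 0 <= luk_imp r x <= 1.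
Proof. intros. unfold luk_imp, luk_oplus, luk_neg. rmin. Qed.

Lemma luk_mul_01 x y : 0 <= x <= 1 -> 0 <= y <= 1 -> 0 <= luk_mul x y <= 1.
Proof. intros. unfold luk_mul, luk_oplus, luk_neg. rmin. Qed.

Lemma luk_mul_le_compat x y x' y' : x <= x' -> y <= y' -> luk_mul x y <= luk_mul x' y'.
Proof. intros. unfold luk_mul, luk_oplus, luk_neg. rmin. Qed.

Lemma luk_imp_mul_bool r x y : r = 0 \/ r = 1 -> 0 <= x <= 1 -> 0 <= y <= 1 ->
  luk_mul (luk_imp r x) (luk_imp r y) = luk_imp r (luk_mul x y).
Proof. intros [-> | ->] ? ?; unfold luk_imp, luk_mul, luk_oplus, luk_neg; rmin. Qed.

Lemma fR_mul_le (I J : Type) (Rel : I -> J -> R) :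
  (forall i j, Rel i j = 0 \/ Rel i j = 1) ->
  forall x y : I -> R, (forall i, 0 <= x i <= 1) -> (forall i, 0 <= y i <= 1) ->
  forall j, luk_mul (fR Rel x j) (fR Rel y j) <= fR Rel (fun i => luk_mul (x i) (y i)) j.
Proof.
  intros HRel x y Hx Hy j.
  assert (Hbound : forall z : I -> R, (forall i, 0 <= z i <= 1) ->
            forall i, 0 <= luk_imp (Rel i j) (z i) <= 1).
  { intros z Hz i. apply luk_imp_01; [destruct (HRel i j) as [-> | ->]; lra | apply Hz]. }
  unfold fR. apply inf01_ge.
  - apply (Hbound (fun i => luk_mul (x i) (y i))). intro i. apply luk_mul_01; [apply Hx | apply Hy].
  - apply luk_mul_01; apply inf01_spec; apply Hbound; assumption.
  - intro i. rewrite <- luk_imp_mul_bool by auto.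
    apply luk_mul_le_compat.
    + exact (inf01_le _ (fun k => luk_imp (Rel k j) (x k)) (Hbound x Hx) i).
    + exact (inf01_le _ (fun k => luk_imp (Rel k j) (y k)) (Hbound y Hy) i).
Qed.

(** * Submultiplicative adjoints *)

Section SpectralRelation.
Variables A B : PavAlg.
Variable f : A -> B.
Hypothesis f_one : mv_le mv_one (f mv_one).
Hypothesis f_mul : forall x y : A, mv_le (mv_mul (f x) (f y)) (f (mv_mul x y)).
Hypothesis f_imp_c : forall (r : R) (y : A), rat01 r ->
  mv_imp (pav_c B r) (f y) = f (mv_imp (pav_c A r) y).
Variables (phi : A -> R) (psi : B -> R).
Hypothesis Hphi : is_std_hom A phi.
Hypothesis Hpsi : is_std_hom B psi.

Lemma std_hom_f_pow a : psi (f a) = 1 -> forall k, psi (f (mv_pow A a k)) = 1.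
Proof.
  intros Ha k. apply Rle_antisym; [apply (std_hom_01 B psi Hpsi)|].
  induction k as [|k IHk]; simpl.
  - rewrite <- (std_hom_one B psi Hpsi). apply (std_hom_le B psi Hpsi), f_one.
  - apply Rle_trans with (psi (mv_mul (f a) (f (mv_pow A a k)))).
    + rewrite (std_hom_mul B psi Hpsi), Ha.
      pose proof (std_hom_01 B psi Hpsi (f (mv_pow A a k))).
      unfold luk_mul, luk_neg, luk_oplus. rmin.
    + apply (std_hom_le B psi Hpsi), f_mul.
Qed.

Let term (a : A) : R := luk_imp (psi (f a)) (phi a).

Lemma term_01 a : 0 <= term a <= 1.
Proof. apply luk_imp_01; [apply (std_hom_01 B psi Hpsi) | apply (std_hom_01 A phi Hphi)]. Qed.

Lemma spectral_inf_zero a : phi a < psi (f a) -> inf01 term = 0.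
Proof.
  intro Hlt.
  pose proof (std_hom_01 A phi Hphi a). pose proof (std_hom_01 B psi Hpsi (f a)).
  destruct (rat01_dense (phi a) (psi (f a))) as [r [Hr Hr2]]; try lra.
  set (a' := mv_imp (pav_c A r) a).
  assert (Ha' : phi a' = 1 - r + phi a).
  { unfold a'. rewrite (std_hom_imp A phi Hphi), (std_hom_c A phi Hphi) by exact Hr. rmin. }
  assert (Hfa' : psi (f a') = 1).
  { unfold a'. rewrite <- f_imp_c by exact Hr.
    rewrite (std_hom_imp B psi Hpsi), (std_hom_c B psi Hpsi) by exact Hr. rmin. }
  destruct (INR_archimed (r - phi a) 1) as [n Hn]; [lra|].
  apply (inf01_eq0 _ _ term_01 (mv_pow A a' n)). unfold term.
  rewrite (std_hom_f_pow a' Hfa' n).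
  pose proof (std_hom_pow_le A phi Hphi a' n) as Hpow. rewrite Ha' in Hpow.
  pose proof (std_hom_01 A phi Hphi (mv_pow A a' n)).
  unfold luk_imp, luk_oplus, luk_neg. rmin.
Qed.

Lemma spectral_inf_one : (forall a, psi (f a) <= phi a) -> inf01 term = 1.
Proof.
  intro Hle. apply (inf01_eq1 _ _ term_01). intro a. unfold term. specialize (Hle a).
  pose proof (std_hom_01 A phi Hphi a). unfold luk_imp, luk_oplus, luk_neg. rmin.
Qed.

Lemma spectral_inf_bool : inf01 term = 0 \/ inf01 term = 1.
Proof.
  destruct (classic (exists a, phi a < psi (f a))) as [[a Ha]|Hnone].
  - left. exact (spectral_inf_zero a Ha).
  - right. apply spectral_inf_one. intro a. apply Rnot_lt_le. intro Ha.
    apply Hnone. exists a. exact Ha.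
Qed.
End SpectralRelation.

Lemma adjoint_one_le (A B : PavAlg) (f : A -> B) (g : B -> A) :
  adjoint A B f g -> mv_le mv_one (f mv_one).
Proof. intros [_ [_ [Hadj _]]]. apply Hadj, mv_le1. Qed.

Lemma relR_bool (A B : PavAlg) (f : A -> B) (g : B -> A) :
  adjoint A B f g ->
  (forall x y : A, mv_le (mv_mul (f x) (f y)) (f (mv_mul x y))) ->
  forall (F : SpecM A) (G : SpecM B), relR A B f F G = 0 \/ relR A B f F G = 1.
Proof.
  intros Hadj Hmul [F HF] [G HG].
  destruct (max_filter_std_hom A F HF) as [phi [Hphi Kphi]].
  destruct (max_filter_std_hom B G HG) as [psi [Hpsi Kpsi]].
  unfold relR; simpl.
  replace (fun a : A => luk_imp (quot_val B G (f a)) (quot_val A F a))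
    with (fun a : A => luk_imp (psi (f a)) (phi a))
    by (apply functional_extensionality; intro a;
        rewrite (quot_val_eq B G psi), (quot_val_eq A F phi); auto).
  apply (spectral_inf_bool A B f (adjoint_one_le A B f g Hadj) Hmul (proj2 (proj2 (proj2 Hadj))));
    assumption.
Qed.

Theorem theorem10 :
  (forall (I J : Type) (Rel : I -> J -> R),
     (forall i j, Rel i j = 0 \/ Rel i j = 1) ->
     forall x y : I -> R,
       (forall i, 0 <= x i <= 1) -> (forall i, 0 <= y i <= 1) ->
       forall j : J,
         luk_mul (fR Rel x j) (fR Rel y j) <= fR Rel (fun i => luk_mul (x i) (y i)) j)
  /\
  (forall (A B : PavAlg) (f : A -> B) (g : B -> A),
     is_semisimple A -> is_semisimple B ->
     adjoint A B f g ->
     (forall x y : A, mv_le (mv_mul (f x) (f y)) (f (mv_mul x y))) ->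
     forall (F : SpecM A) (G : SpecM B),
       relR A B f F G = 0 \/ relR A B f F G = 1).
Proof.
  split.
  - exact fR_mul_le.
  -
    intros A B f g _ _. exact (relR_bool A B f g).
Qed.
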